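(* Let $q_1,\dots,q_8$ be the eight points $(\pm1,\pm1,\pm1)$ of $\mathbb{R}^3$, let $t\in(0,1)$ and $q_{j+8}=tq_j$ ($j=1,\dots,8$), so that these are the vertices of two nested cubes with ratio of edges $t$. Place mass $\mu_1$ at each of $q_1,\dots,q_8$ and mass $\mu_2\neq0$ at each of $q_9,\dots,q_{16}$. Then the configuration is a central configuration if and only if $$\frac{\mu_1}{\mu_2}=-\frac{24c(t)-\frac{\sqrt3t+\sqrt3}{3(t+1)^3}-\frac{3(t+3)}{(3t^2+2t+3)^{3/2}}+\frac{3(t-3)}{(3t^2-2t+3)^{3/2}}-\frac{\sqrt3t-\sqrt3}{3(t-1)^3}}{24c(t)-\frac{\sqrt3}{12}-\frac{3\sqrt2}{8}-\frac34},$$ where $c(t)=-\gamma_0(t)/\gamma_1(t)$ with $$\gamma_1(t)=-\left((2\sqrt3+9\sqrt2+18)t-\frac{72(t^2+6t+1)}{(3t^2+2t+3)^{3/2}}+\frac{72(t^2-6t+1)}{(3t^2-2t+3)^{3/2}}-\frac{8\sqrt3}{t+1}-\frac{8\sqrt3}{t-1}+\frac{2\sqrt3+9\sqrt2+18}{t^2}\right),$$ $$\begin{aligned}\gamma_0(t)=&-\frac{9(3t+1)(t+3)}{(3t^2+2t+3)^3}+\frac{9(3t-1)(t-3)}{(3t^2-2t+3)^3}+\frac{6\sqrt3\sqrt2+12\sqrt3+54\sqrt2+83}{96t^2}\\&-\frac{4\sqrt3}{(3t^2+2t+3)^{3/2}(t+1)}-\frac{2\sqrt3}{(3t^2-2t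+3)^{3/2}(t+1)}-\frac{2\sqrt3}{(3t^2+2t+3)^{3/2}(t-1)}-\frac{4\sqrt3}{(3t^2-2t+3)^{3/2}(t-1)}\\&-\frac{144t}{(3t^2+2t+3)^{3/2}(3t^2-2t+3)^{3/2}}-\frac{1}{3(t+1)^4}+\frac{1}{3(t-1)^4}.\end{aligned}$$
   Context: A configuration $q=(q_1,\dots,q_N)$ of distinct points in $\mathbb{R}^3$ with masses $m_1,\dots,m_N$ is a central configuration if there exists $c\in\mathbb{R}$ such that $\sum_{j\neq i} m_j\left(\frac{1}{|q_j-q_i|^3}-c\right)(q_j-q_i)=0$ for all $i=1,\dots,N$. *)

From HB Require Import structures.
From mathcomp Require Import all_boot all_order all_algebra.
From mathcomp Require Import reals.
Set Implicit Arguments. Unset Strict Implicit. Unset Printing Implicit Defensive.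
Import Order.TTheory GRing.Theory Num.Theory.
Local Open Scope ring_scope.

Definition enorm (R : realType) (v : 'rV[R]_3) : R :=
  Num.sqrt (\sum_(k < 3) v ord0 k ^+ 2).

Definition central_configuration (R : realType) (N : nat)
    (q : 'I_N -> 'rV[R]_3) (m : 'I_N -> R) : Prop :=
  (forall i j : 'I_N, i != j -> q i != q j) /\
  exists c : R, forall i : 'I_N,
    \sum_(j < N | j != i)
       (m j * ((enorm (q j - q i)) ^- 3 - c)) *: (q j - q i) = 0.

Definition sgb (R : realType) (b : bool) : R := if b then -1 else 1.

(* The k-th vertex (k mod 8) of the cube (+-1,+-1,+-1), enumerated by bits. *)
Definition cube_vertex (R : realType) (k : nat) : 'rV[R]_3 :=
  \row_(j < 3) sgb R (odd (k %/ 2 ^ j)).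

Definition nested_cubes (R : realType) (t : R) (i : 'I_16) : 'rV[R]_3 :=
  if (i < 8)%N then cube_vertex R i else t *: cube_vertex R (i - 8).

Definition nested_masses (R : realType) (mu1 mu2 : R) (i : 'I_16) : R :=
  if (i < 8)%N then mu1 else mu2.

Definition pow32 (R : realType) (x : R) : R := Num.sqrt x ^+ 3.

Section Formulas.
Variable R : realType.
Implicit Types t : R.
Local Notation s3 := (Num.sqrt (3 : R)).
Local Notation s2 := (Num.sqrt (2 : R)).
Definition PA t : R := 3 * t ^+ 2 + 2 * t + 3.
Definition PB t : R := 3 * t ^+ 2 - 2 * t + 3.

Definition gamma1 t : R :=
  - ((2 * s3 + 9 * s2 + 18) * t
     - 72 * (t ^+ 2 + 6 * t + 1) / pow32 (PA t)
     + 72 * (t ^+ 2 - 6 * t + 1) / pow32 (PB t)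
     - 8 * s3 / (t + 1) - 8 * s3 / (t - 1)
     + (2 * s3 + 9 * s2 + 18) / t ^+ 2).

Definition gamma0 t : R :=
  - (9 * (3 * t + 1) * (t + 3)) / (PA t) ^+ 3
  + 9 * (3 * t - 1) * (t - 3) / (PB t) ^+ 3
  + (6 * s3 * s2 + 12 * s3 + 54 * s2 + 83) / (96 * t ^+ 2)
  - 4 * s3 / (pow32 (PA t) * (t + 1))
  - 2 * s3 / (pow32 (PB t) * (t + 1))
  - 2 * s3 / (pow32 (PA t) * (t - 1))
  - 4 * s3 / (pow32 (PB t) * (t - 1))
  - 144 * t / (pow32 (PA t) * pow32 (PB t))
  - 1 / (3 * (t + 1) ^+ 4)
  + 1 / (3 * (t - 1) ^+ 4).

Definition cfun t : R := - gamma0 t / gamma1 t.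

Definition mass_ratio t : R :=
  - (24 * cfun t
     - (s3 * t + s3) / (3 * (t + 1) ^+ 3)
     - 3 * (t + 3) / pow32 (PA t)
     + 3 * (t - 3) / pow32 (PB t)
     - (s3 * t - s3) / (3 * (t - 1) ^+ 3))
  / (24 * cfun t - s3 / 12 - 3 * s2 / 8 - 3 / 4).
End Formulas.

(* Index the vertices by n < 16: bits 0, 1, 2 of n give the signs of the
   coordinates and n < 8 marks the outer cube.  Distances only depend on the two
   half-edges and on the number of differing signs, and the symmetries of the cube
   permute the vertices, so the 48 scalar equations reduce to the first coordinate
   at (1,1,1) and at t(1,1,1):
     mu1 (a11 + c') + mu2 (a12 + c') = 0,   mu1 (a21 + t c') + mu2 (a22 + t c') = 0
   with c' = 8c.  Eliminating c' leaves mu1 P + mu2 Q = 0 with P = a21 - t a11 and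
   Q = a22 - t a12, and c' can be recovered as long as Q <> P.  The paper's gamma1
   and gamma0 are 72 (Q - P) and 9 (Q a11 - P a12), so c(t) is the common value of
   c and the displayed quotient is -Q/P as soon as a12 <> a11.  The conditions
   P > 0, Q < P and a12 < a11 follow from elementary bounds on sqrt 2, sqrt 3 and
   the radicals sqrt (3t^2 +- 2t + 3) for 0 < t < 1. *)

From HB Require Import structures.
From mathcomp Require Import all_boot all_order all_algebra.
From mathcomp Require Import reals.
From mathcomp Require Import ring lra.
Set Implicit Arguments. Unset Strict Implicit. Unset Printing Implicit Defensive.
Import Order.TTheory GRing.Theory Num.Theory.
Local Open Scope ring_scope.

Lemma sqrt_sqr_mul (R : rcfType) (a b : R) : 0 <= a ->
  Num.sqrt (a ^+ 2 * b) = a * Num.sqrt b.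
Proof. by move=> a_ge0; rewrite sqrtrM ?sqr_ge0 // sqrtr_sqr ger0_norm. Qed.

Lemma sqrtr_invcube_mul (R : rcfType) (x : R) : 0 < x ->
  Num.sqrt x ^- 3 * x = (Num.sqrt x)^-1.
Proof.
move=> x_gt0; rewrite -{2}(sqr_sqrtr (ltW x_gt0)).
by field; rewrite gt_eqF ?sqrtr_gt0.
Qed.

Lemma cube_sub_ge (R : realFieldType) (u v : R) : 0 <= u -> u <= v ->
  3 / 4 * (v ^+ 2 - u ^+ 2) * (u + v) <= v ^+ 3 - u ^+ 3.
Proof.
move=> u_ge0 u_le_v.
have -> : v ^+ 3 - u ^+ 3 = 3 / 4 * (v ^+ 2 - u ^+ 2) * (u + v) + (v - u) ^+ 3 / 4.
  by field.
by rewrite lerDl divr_ge0 // exprn_ge0 // subr_ge0.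
Qed.

(* 511/360 = 7/36 + 3/5 + 5/8 and 17/90 come from the bounds on sqrt 3 / 9, X^-1
   and Y^-1 used in [qcoef_lt_pcoef], and 17/36 bounds [- a11]. *)
Lemma cubic_margin (R : realFieldType) (t : R) : 0 < t < 1 ->
  t ^+ 2 * (511 / 360 * (1 - t) - 17 / 90) < 17 / 36 * (1 - t).
Proof.
case/andP=> t_gt0 t_lt1.
by have := sqr_ge0 (t - 3 / 4); rewrite !expr2 => ?; nra.
Qed.

Lemma eliminate_multiplier (F : fieldType) (x y a1 b1 a2 b2 t : F) :
  y != 0 -> a2 - t * a1 != 0 -> b2 - t * b1 != a2 - t * a1 ->
  (exists c, x * (a1 + c) + y * (b1 + c) = 0 /\ x * (a2 + t * c) + y * (b2 + t * c) = 0)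
  <-> x / y = - (b2 - t * b1) / (a2 - t * a1).
Proof.
set p := a2 - t * a1; set q := b2 - t * b1 => y_neq0 p_neq0 q_neq_p.
have elim c : x * (a2 + t * c) + y * (b2 + t * c) - t * (x * (a1 + c) + y * (b1 + c))
    = x * p + y * q by rewrite /p /q; ring.
split.
- case=> c [eq1 eq2]; move: (elim c); rewrite eq1 eq2 mulr0 subrr => /esym pq0.
  by apply/eqP; rewrite eqr_div // mulNr -subr_eq0 opprK [q * y]mulrC pq0.
- move=> xy; have x_def : x = - q / p * y by rewrite -xy mulfVK.
  have xy_neq0 : x + y != 0.
    rewrite (_ : x + y = y * (p - q) / p); last by rewrite x_def; field.
    by rewrite mulf_neq0 ?invr_eq0 // mulf_neq0 // subr_eq0 eq_sym.
  pose c := - (x * a1 + y * b1) / (x + y).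
  have eq1 : x * (a1 + c) + y * (b1 + c) = 0 by rewrite /c; field.
  exists c; split => //.
  by have := elim c; rewrite eq1 mulr0 subr0 => ->; rewrite x_def; field.
Qed.

(** * Vertices and forces *)

Definition cube_bit (n k : nat) : bool := odd (n %/ 2 ^ k).

Definition hamming3 (n m : nat) : nat :=
  (cube_bit n 0 != cube_bit m 0) + (cube_bit n 1 != cube_bit m 1)
  + (cube_bit n 2 != cube_bit m 2).

Lemma cube_bitD8 (m k : nat) : (k < 3)%N -> cube_bit (m + 8) k = cube_bit m k.
Proof.
move=> k_lt3; rewrite /cube_bit divnDr ?oddD; last exact: (@dvdn_exp2l 2 k 3 (ltnW k_lt3)).
by rewrite (_ : odd (8 %/ 2 ^ k) = false) ?addbF //; case: k k_lt3 => [|[|[|]]].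
Qed.

Lemma cube_index_bits (n : nat) : (n < 16)%N ->
  n = (8 * (8 <= n) + 4 * cube_bit n 2 + 2 * cube_bit n 1 + cube_bit n 0)%N.
Proof. by do 16 (case: n => [|n] //). Qed.

(* Only the index arithmetic is evaluated: [vm_compute] on the whole goal would
   unfold the real numbers. *)
Ltac eval_cube_indices := repeat match goal with
| |- context [hamming3 ?a ?b] =>
    let v := eval vm_compute in (hamming3 a b) in change (hamming3 a b) with v
| |- context [cube_bit ?a ?b] =>
    let v := eval vm_compute in (cube_bit a b) in change (cube_bit a b) with v
| |- context [leq ?a ?b] =>
    let v := eval vm_compute in (leq a b) in change (leq a b) with v
| |- context [@eq_op nat ?a ?b] =>
    let v := eval vm_compute in (@eq_op nat a b) in change (@eq_op nat a b) with v
end.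

Section Configuration.
Variable R : realType.
Implicit Types (t c a b : R) (i k n : nat).

Definition shell_scale t n : R := if (n < 8)%N then 1 else t.
Definition shell_mass (mu1 mu2 : R) n : R := if (n < 8)%N then mu1 else mu2.
Definition vertex_coord t n k : R := shell_scale t n * sgb R (cube_bit n k).

(* The scalar product of two sign vectors that differ in [d] places is [3 - 2 d]. *)
Definition cube_dist a b (d : nat) : R :=
  Num.sqrt (3 * (a ^+ 2 + b ^+ 2) - 2 * a * b * (3 - 2 * d%:R)).

Lemma nested_cubesE t (i : 'I_16) (k : 'I_3) :
  nested_cubes t i ord0 k = vertex_coord t i k.
Proof.
rewrite /nested_cubes /cube_vertex /vertex_coord /shell_scale.
case: ifP => [_|/negbT]; first by rewrite mxE mul1r.
by rewrite -leqNgt !mxE => /subnK {2}<-; rewrite cube_bitD8.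
Qed.

Lemma sgb_sub_sqr a b (x y : bool) : (a * sgb R x - b * sgb R y) ^+ 2 =
  a ^+ 2 + b ^+ 2 - 2 * a * b * (1 - 2 * (x != y)%:R).
Proof. by case: x; case: y; rewrite /sgb /=; ring. Qed.

Lemma enorm_nested_cubes t (i j : 'I_16) :
  enorm (nested_cubes t j - nested_cubes t i) =
  cube_dist (shell_scale t j) (shell_scale t i) (hamming3 j i).
Proof.
rewrite /enorm /cube_dist; congr Num.sqrt.
rewrite !big_ord_recr big_ord0 /= !mxE !nested_cubesE /vertex_coord !sgb_sub_sqr.
by rewrite /hamming3 !natrD; ring.
Qed.

Lemma sgb_inj : injective (sgb R).
Proof. by case; case => //= h; exfalso; lra. Qed.

Lemma normr_vertex_coord t n k : 0 < t -> `|vertex_coord t n k| = shell_scale t n.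
Proof.
move=> t_gt0; rewrite /vertex_coord normrM.
have -> : `|sgb R (cube_bit n k)| = 1 by case: cube_bit; rewrite ?normrN normr1.
by rewrite mulr1 /shell_scale; case: ifP; rewrite ?normr1 ?gtr0_norm.
Qed.

Lemma nested_cubes_inj t : 0 < t < 1 -> injective (nested_cubes t).
Proof.
case/andP=> t_gt0 t_lt1 i j eq_ij.
have coord k : (k < 3)%N -> vertex_coord t i k = vertex_coord t j k.
  by move=> k_lt3; rewrite -[k]/(nat_of_ord (Ordinal k_lt3)) -!nested_cubesE eq_ij.
have scale : shell_scale t i = shell_scale t j.
  by rewrite -(normr_vertex_coord i 0 t_gt0) coord // normr_vertex_coord.
have shell : (8 <= i)%N = (8 <= j)%N.
  rewrite leqNgt [RHS]leqNgt; congr negb; move: scale; rewrite /shell_scale.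
  by case: (i < 8)%N; case: (j < 8)%N => // eq_t; move: t_lt1; rewrite eq_t ltxx.
have bits k : (k < 3)%N -> cube_bit i k = cube_bit j k.
  move=> k_lt3; apply: sgb_inj; apply: (mulfI (_ : shell_scale t i != 0)).
    by rewrite /shell_scale; case: ifP => _; rewrite ?oner_eq0 ?gt_eqF.
  by have := coord k k_lt3; rewrite /vertex_coord scale.
apply: val_inj; rewrite /= (cube_index_bits (ltn_ord i)) (cube_index_bits (ltn_ord j)).
by rewrite shell !bits.
Qed.

Definition force_term t (mu1 mu2 : R) c i k n : R :=
  if n != i then
    shell_mass mu1 mu2 n
    * (cube_dist (shell_scale t n) (shell_scale t i) (hamming3 n i) ^- 3 - c)
    * (vertex_coord t n k - vertex_coord t i k)
  else 0.

Definition force t (mu1 mu2 : R) c i k : R :=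
  \sum_(0 <= n < 16) force_term t mu1 mu2 c i k n.

Lemma force_coordE t (mu1 mu2 : R) c (i : 'I_16) (k : 'I_3) :
  (\sum_(j < 16 | j != i)
     (nested_masses mu1 mu2 j * ((enorm (nested_cubes t j - nested_cubes t i)) ^- 3 - c))
       *: (nested_cubes t j - nested_cubes t i)) ord0 k = force t mu1 mu2 c i k.
Proof.
rewrite summxE big_mkcond /force big_mkord; apply: eq_bigr => j _.
rewrite /force_term -(inj_eq val_inj); case: eqP => // _.
by rewrite !mxE enorm_nested_cubes !nested_cubesE.
Qed.

Lemma big_nat16 (F : nat -> R) : \sum_(0 <= n < 16) F n =
  F 0%N + F 1%N + F 2%N + F 3%N + F 4%N + F 5%N + F 6%N + F 7%N + F 8%N + F 9%N
  + F 10%N + F 11%N + F 12%N + F 13%N + F 14%N + F 15%N.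
Proof. by rewrite /index_iota /= !big_cons big_nil addr0 !addrA. Qed.

Lemma cube_distC a b d : cube_dist a b d = cube_dist b a d.
Proof. by rewrite /cube_dist; congr Num.sqrt; ring. Qed.

(* The reflections in the coordinate planes and the permutations of the axes
   permute the vertices: each case is a rearrangement of the 16 terms. *)
Lemma force_sym t (mu1 mu2 : R) c i k : (i < 16)%N -> (k < 3)%N ->
  force t mu1 mu2 c i k =
  sgb R (cube_bit i k) * force t mu1 mu2 c (if (i < 8)%N then 0 else 8) 0.
Proof.
move=> i_lt16 k_lt3; rewrite /force.
do 16 (case: i i_lt16 => [_|i i_lt16]; [case: k k_lt3 => [_|[_|[_|//]]];
  rewrite !big_nat16 /force_term; eval_cube_indices;
  rewrite /shell_mass /shell_scale /vertex_coord /sgb /= ?(cube_distC t 1); ring|]).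
by [].
Qed.

Lemma cube_dist_scale t a b d : 0 <= t ->
  cube_dist (a * t) (b * t) d = cube_dist a b d * t.
Proof.
by move=> t_ge0; rewrite /cube_dist [RHS]mulrC -sqrt_sqr_mul //; congr Num.sqrt; ring.
Qed.

Lemma cube_dist_outer :
  [/\ cube_dist 1 1 1 = 2, cube_dist 1 1 2 = 2 * Num.sqrt 2
    & cube_dist 1 1 3 = 2 * Num.sqrt 3].
Proof.
rewrite /cube_dist; split; last 2 first.
- by rewrite (_ : _ - _ = 2 ^+ 2 * 2) ?sqrt_sqr_mul //; ring.
- by rewrite (_ : _ - _ = 2 ^+ 2 * 3) ?sqrt_sqr_mul //; ring.
by rewrite (_ : _ - _ = 2 ^+ 2 * 1) ?sqrt_sqr_mul ?sqrtr1 ?mulr1 //; ring.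
Qed.

Lemma cube_dist_shells t : 0 < t < 1 ->
  [/\ cube_dist 1 t 0 = Num.sqrt 3 * (1 - t), cube_dist 1 t 1 = Num.sqrt (PB t),
      cube_dist 1 t 2 = Num.sqrt (PA t) & cube_dist 1 t 3 = Num.sqrt 3 * (1 + t)].
Proof.
case/andP=> /ltW t_ge0 /ltW t_le1; rewrite /cube_dist /PA /PB; split.
- rewrite (_ : _ - _ = (1 - t) ^+ 2 * 3) ?sqrt_sqr_mul 1?mulrC ?subr_ge0 //; ring.
- by congr Num.sqrt; ring.
- by congr Num.sqrt; ring.
- rewrite (_ : _ - _ = (1 + t) ^+ 2 * 3) ?sqrt_sqr_mul 1?mulrC ?addr_ge0 //; ring.
Qed.

End Configuration.

(** * The two scalar equations *)

(* [a1j] (resp. [a2j]) is the first coordinate of the attraction exerted per unit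
   mass by the vertices of cube j (1 = outer) on the vertex (1,1,1) of the outer
   (resp. t(1,1,1) of the inner) cube; [pcoef] and [qcoef] remain after
   eliminating the multiplier. *)
Section Coefficients.
Variable R : realType.
Implicit Types t : R.
Local Notation s2 := (Num.sqrt (2 : R)).
Local Notation s3 := (Num.sqrt (3 : R)).
Local Notation X t := (Num.sqrt (PA t)).
Local Notation Y t := (Num.sqrt (PB t)).

Definition a11 : R := - 2 / 2 ^+ 3 - 4 / (2 * s2) ^+ 3 - 2 / (2 * s3) ^+ 3.
Definition a12 t : R := (t - 1) / (s3 * (1 - t)) ^+ 3 + (t - 3) / Y t ^+ 3
  - (t + 3) / X t ^+ 3 - (1 + t) / (s3 * (1 + t)) ^+ 3.
Definition a21 t : R := (1 - t) / (s3 * (1 - t)) ^+ 3 + (1 - 3 * t) / Y t ^+ 3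
  - (1 + 3 * t) / X t ^+ 3 - (1 + t) / (s3 * (1 + t)) ^+ 3.
Definition a22 t : R := - 2 * t / (2 * t) ^+ 3 - 4 * t / (2 * s2 * t) ^+ 3
  - 2 * t / (2 * s3 * t) ^+ 3.
Definition pcoef t : R := a21 t - t * a11.
Definition qcoef t : R := a22 t - t * a12 t.
End Coefficients.
Arguments a11 {R}.

Section Reduction.
Variable R : realType.

Lemma force_outer (t mu1 mu2 c : R) : 0 < t < 1 ->
  force t mu1 mu2 c 0 0 = mu1 * (a11 + 8 * c) + mu2 * (a12 t + 8 * c).
Proof.
move=> t01; have [d11 d12 d13] := cube_dist_outer R.
have [d0 d1 d2 d3] := cube_dist_shells t01.
rewrite /force big_nat16 /force_term /shell_mass /vertex_coord /shell_scale.
eval_cube_indices; rewrite /sgb /= ?(cube_distC t 1).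
by rewrite d11 d12 d13 d0 d1 d2 d3 /a11 /a12; ring.
Qed.

Lemma force_inner (t mu1 mu2 c : R) : 0 < t < 1 ->
  force t mu1 mu2 c 8 0 = mu1 * (a21 t + t * (8 * c)) + mu2 * (a22 t + t * (8 * c)).
Proof.
move=> t01; have /andP[t_gt0 _] := t01; have [d11 d12 d13] := cube_dist_outer R.
have [d0 d1 d2 d3] := cube_dist_shells t01.
rewrite /force big_nat16 /force_term /shell_mass /vertex_coord /shell_scale.
eval_cube_indices; rewrite /sgb /= ?(cube_distC t 1).
rewrite -[t]mul1r !cube_dist_scale ?ltW // !mul1r.
by rewrite d11 d12 d13 d0 d1 d2 d3 /a21 /a22; ring.
Qed.

Lemma central_configuration_nested_cubesE t (mu1 mu2 : R) : 0 < t < 1 ->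
  central_configuration (nested_cubes t) (nested_masses mu1 mu2) <->
  exists c, mu1 * (a11 + c) + mu2 * (a12 t + c) = 0
         /\ mu1 * (a21 t + t * c) + mu2 * (a22 t + t * c) = 0.
Proof.
move=> t01; split.
- case=> _ [c eq_c]; exists (8 * c).
  have coord0 i : (i < 16)%N -> force t mu1 mu2 c i 0 = 0.
    move=> i_lt16; rewrite -[i]/(nat_of_ord (Ordinal i_lt16)).
    by rewrite -(force_coordE _ _ _ _ _ ord0) eq_c mxE.
  by rewrite -force_outer // -force_inner // !coord0.
- case=> c [outer inner]; split.
    by move=> i j; apply: contra_neq; apply: nested_cubes_inj.
  exists (c / 8) => i; apply/rowP => k; rewrite force_coordE mxE force_sym //.
  have c8 : 8 * (c / 8) = c by rewrite mulrC divfK // pnatr_eq0.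
  by case: ifP => _; rewrite ?force_outer ?force_inner // c8 ?outer ?inner mulr0.
Qed.

End Reduction.

(** * Estimates *)

Section Estimates.
Variables (R : realType) (t : R).
Hypothesis t01 : 0 < t < 1.
Local Notation s2 := (Num.sqrt (2 : R)).
Local Notation s3 := (Num.sqrt (3 : R)).
Local Notation X := (Num.sqrt (PA t)).
Local Notation Y := (Num.sqrt (PB t)).

Lemma sqrt2_bounds : 7 / 5 <= s2 <= 3 / 2.
Proof.
have s2_sq : s2 ^+ 2 = 2 by rewrite sqr_sqrtr.
have s2_gt0 : 0 < s2 by rewrite sqrtr_gt0.
by apply/andP; split; nra.
Qed.

Lemma sqrt3_bounds : 17 / 10 <= s3 <= 7 / 4.
Proof.
have s3_sq : s3 ^+ 2 = 3 by rewrite sqr_sqrtr.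
have s3_gt0 : 0 < s3 by rewrite sqrtr_gt0.
by apply/andP; split; nra.
Qed.

Lemma PA_bounds : 3 < PA t < 8.
Proof.
have /andP[t_gt0 t_lt1] := t01.
by rewrite /PA expr2; apply/andP; split; nra.
Qed.

Lemma PB_bounds : 8 / 3 <= PB t < 4.
Proof.
have /andP[t_gt0 t_lt1] := t01.
have := sqr_ge0 (3 * t - 1); rewrite /PB !expr2 => ?.
by apply/andP; split; nra.
Qed.

Lemma PB_lt_PA : PB t < PA t.
Proof. by have /andP[t_gt0 _] := t01; rewrite /PA /PB; lra. Qed.

Lemma PA_gt0 : 0 < PA t.
Proof. by have /andP[PA_gt3 _] := PA_bounds; lra. Qed.

Lemma PB_gt0 : 0 < PB t.
Proof. by have /andP[PB_ge _] := PB_bounds; lra. Qed.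

Lemma radicals_gt0 : [/\ 0 < s2, 0 < s3, 0 < X & 0 < Y].
Proof. by split; rewrite sqrtr_gt0 ?PA_gt0 ?PB_gt0. Qed.

Lemma denoms_neq0 : [/\ t != 0, t - 1 != 0, t + 1 != 0, 1 - t != 0 & 1 + t != 0].
Proof. by have /andP[t_gt0 t_lt1] := t01; split; apply/eqP => h; lra. Qed.

Lemma a11E : a11 = - (1 / 4) - s2 / 8 - s3 / 36 :> R.
Proof.
have [s2_gt0 s3_gt0 _ _] := radicals_gt0.
rewrite /a11; field: (sqr_sqrtr (ler0n R 2)) (sqr_sqrtr (ler0n R 3)).
by rewrite !gt_eqF.
Qed.

Lemma a12E : a12 t = - s3 / 9 * (1 - t) ^- 2 - (3 - t) * Y ^- 3
  - (3 + t) * X ^- 3 - s3 / 9 * (1 + t) ^- 2.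
Proof.
have /andP[t_gt0 t_lt1] := t01; have [_ s3_gt0 X_gt0 Y_gt0] := radicals_gt0.
rewrite /a12; field: (sqr_sqrtr (ler0n R 3)).
by rewrite !gt_eqF ?subr_gt0 ?addr_gt0.
Qed.

Lemma a21E : a21 t = s3 / 9 * ((1 - t) ^- 2 - (1 + t) ^- 2)
  + (1 - 3 * t) * Y ^- 3 - (1 + 3 * t) * X ^- 3.
Proof.
have /andP[t_gt0 t_lt1] := t01; have [_ s3_gt0 X_gt0 Y_gt0] := radicals_gt0.
rewrite /a21; field: (sqr_sqrtr (ler0n R 3)).
by rewrite !gt_eqF ?subr_gt0 ?addr_gt0.
Qed.

Lemma a22E : t ^+ 2 * a22 t = a11.
Proof.
have /andP[t_gt0 _] := t01; have [s2_gt0 s3_gt0 _ _] := radicals_gt0.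
by rewrite /a22 /a11; field; rewrite !gt_eqF.
Qed.

Lemma t_a12_add_a21E : t * a12 t + a21 t = s3 / 9 * ((1 - t)^-1 - (1 + t)^-1)
  + (t ^+ 2 - 6 * t + 1) * Y ^- 3 - (t ^+ 2 + 6 * t + 1) * X ^- 3.
Proof.
have /andP[t_gt0 t_lt1] := t01; have [_ _ X_gt0 Y_gt0] := radicals_gt0.
by rewrite a12E a21E; field; rewrite !gt_eqF ?subr_gt0 ?addr_gt0.
Qed.

Lemma invX_bounds : 0 < X^-1 < 3 / 5 /\ 1 / 8 < X^-1 ^+ 2 < 1 / 3.
Proof.
have /andP[PA_gt3 PA_lt8] := PA_bounds; have [_ _ X_gt0 _] := radicals_gt0.
have uX : X^-1 ^+ 2 * PA t = 1 by rewrite exprVn sqr_sqrtr ?mulVf ?gt_eqF ?ltW ?PA_gt0.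
have u_gt0 : 0 < X^-1 by rewrite invr_gt0.
set u := X^-1 in uX u_gt0 *.
have [u2_gt u2_lt] : 1 / 8 < u ^+ 2 /\ u ^+ 2 < 1 / 3.
  have : 0 < u ^+ 2 by rewrite exprn_gt0.
  by set w := u ^+ 2 in uX *; split; nra.
rewrite u2_gt u2_lt u_gt0; split => //; rewrite expr2 in u2_lt; nra.
Qed.

Lemma invY_bounds : 1 / 2 < Y^-1 <= 5 / 8 /\ 1 / 4 < Y^-1 ^+ 2 <= 3 / 8.
Proof.
have /andP[PB_ge PB_lt4] := PB_bounds; have [_ _ _ Y_gt0] := radicals_gt0.
have vY : Y^-1 ^+ 2 * PB t = 1 by rewrite exprVn sqr_sqrtr ?mulVf ?gt_eqF ?ltW ?PB_gt0.
have v_gt0 : 0 < Y^-1 by rewrite invr_gt0.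
set v := Y^-1 in vY v_gt0 *.
have [v2_gt v2_le] : 1 / 4 < v ^+ 2 /\ v ^+ 2 <= 3 / 8.
  have : 0 < v ^+ 2 by rewrite exprn_gt0.
  by set w := v ^+ 2 in vY *; split; nra.
rewrite v2_gt v2_le; rewrite expr2 in v2_gt v2_le; split => //; apply/andP; split; nra.
Qed.

Lemma invX_lt_invY : X^-1 < Y^-1.
Proof.
have [_ _ X_gt0 Y_gt0] := radicals_gt0.
by rewrite ltf_pV2 ?posrE // ltr_sqrt ?PB_lt_PA ?PA_gt0.
Qed.

Lemma a11_le : a11 <= - (17 / 36) :> R.
Proof.
have /andP[s2_ge _] := sqrt2_bounds; have /andP[s3_ge _] := sqrt3_bounds.
by rewrite a11E; lra.
Qed.

Lemma a12_lt_a11 : a12 t < a11.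
Proof.
have /andP[t_gt0 t_lt1] := t01.
have /andP[s2_ge s2_le] := sqrt2_bounds; have /andP[s3_ge s3_le] := sqrt3_bounds.
have [/andP[v_gt v_le] _] := invY_bounds; have [/andP[u_gt0 _] _] := invX_bounds.
have w_ge1 : 1 <= (1 - t) ^- 2.
  by rewrite invf_ge1 ?exprn_gt0 ?subr_gt0 // expr2; nra.
have z_ge : 1 / 4 <= (1 + t) ^- 2.
  have z_gt0 : 0 < (1 + t) ^+ 2 by rewrite exprn_gt0 // addr_gt0.
  have zK : (1 + t) ^- 2 * (1 + t) ^+ 2 = 1 by rewrite mulVf ?gt_eqF.
  by set z := (1 + t) ^- 2 in zK *; rewrite expr2 in zK z_gt0; nra.
have v3_ge : 1 / 8 <= Y ^- 3.
  by rewrite -exprVn; set v := Y^-1 in v_gt v_le *; rewrite !exprS expr0 mulr1; nra.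
have u3_ge0 : 0 <= X ^- 3 by rewrite -exprVn exprn_ge0 // ltW.
rewrite a12E a11E.
have : s3 / 9 <= s3 / 9 * (1 - t) ^- 2 by nra.
have : s3 / 36 <= s3 / 9 * (1 + t) ^- 2 by nra.
have : 1 / 4 <= (3 - t) * Y ^- 3 by nra.
have : 0 <= (3 + t) * X ^- 3 by rewrite mulr_ge0 // addr_ge0 // ltW.
lra.
Qed.

Lemma cross_terms_le : (1 + 3 * t) * X ^- 3 - (1 - 3 * t) * Y ^- 3 <=
  3 * t * (X ^- 3 * (1 - Y ^- 2) + Y ^- 3 * (1 - X ^- 2)).
Proof.
have /andP[t_gt0 _] := t01; have [_ _ X_gt0 Y_gt0] := radicals_gt0.
have u_le_v := ltW invX_lt_invY; have [/andP[u_gt0 _] _] := invX_bounds.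
have gap : Y ^- 2 - X ^- 2 = 4 * t * X ^- 2 * Y ^- 2.
  rewrite !sqr_sqrtr ?ltW ?PA_gt0 ?PB_gt0 //.
  by rewrite /PA /PB; field; rewrite -/(PA t) -/(PB t) !gt_eqF ?PA_gt0 ?PB_gt0.
rewrite -!exprVn in gap *; set u := X^-1 in u_le_v u_gt0 gap *.
set v := Y^-1 in u_le_v gap *.
by have := cube_sub_ge (ltW u_gt0) u_le_v; rewrite gap; nra.
Qed.

Lemma cross_terms_bound : X ^- 3 * (1 - Y ^- 2) + Y ^- 3 * (1 - X ^- 2) <= 3 / 8.
Proof.
have [/andP[u_gt0 u_lt] /andP[u2_gt u2_lt]] := invX_bounds.
have [/andP[v_gt v_le] /andP[v2_gt v2_le]] := invY_bounds.
rewrite -!exprVn; set u := X^-1 in u_gt0 u_lt u2_gt u2_lt *.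
set v := Y^-1 in v_gt v_le v2_gt v2_le *.
have u3_ge0 : 0 <= u ^+ 3 by rewrite exprn_ge0 // ltW.
have v3_ge0 : 0 <= v ^+ 3 by rewrite exprn_ge0 //; lra.
have u3_le : u ^+ 3 <= 1 / 5 by rewrite exprS; nra.
have v3_le : v ^+ 3 <= 15 / 64 by rewrite exprS; nra.
have : u ^+ 3 * (1 - v ^+ 2) <= 1 / 5 * (3 / 4) by apply: ler_pM => //; lra.
have : v ^+ 3 * (1 - u ^+ 2) <= 15 / 64 * (7 / 8) by apply: ler_pM => //; lra.
lra.
Qed.

Lemma pcoef_gt0 : 0 < pcoef t.
Proof.
have /andP[t_gt0 t_lt1] := t01; have /andP[s3_ge _] := sqrt3_bounds.
have shells : 4 * t <= (1 - t) ^- 2 - (1 + t) ^- 2.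
  have t2_lt1 : t ^+ 2 < 1 by rewrite expr2; nra.
  have -> : (1 - t) ^- 2 - (1 + t) ^- 2 = 4 * t * (1 - t ^+ 2) ^- 2.
    by field; rewrite !gt_eqF ?subr_gt0 ?addr_gt0.
  have : 1 <= (1 - t ^+ 2) ^- 2.
    rewrite invf_ge1 ?exprn_gt0 ?subr_gt0 //.
    by move: (exprn_gt0 2 t_gt0) t2_lt1; set s := t ^+ 2 => *; rewrite expr2; nra.
  by nra.
have := cross_terms_le; have := cross_terms_bound; have := a11_le.
rewrite /pcoef a21E => ? ? ?.
have : s3 / 9 * (4 * t) <= s3 / 9 * ((1 - t) ^- 2 - (1 + t) ^- 2).
  by rewrite ler_wpM2l // divr_ge0 // sqrtr_ge0.
nra.
Qed.

Lemma qcoef_lt_pcoef : qcoef t < pcoef t.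
Proof.
have /andP[t_gt0 t_lt1] := t01; have /andP[s3_ge s3_le] := sqrt3_bounds.
have [_ _ X_gt0 Y_gt0] := radicals_gt0.
have [/andP[u_gt0 u_lt] _] := invX_bounds; have [/andP[v_gt v_le] _] := invY_bounds.
have t2_gt0 : 0 < t ^+ 2 by rewrite exprn_gt0.
rewrite -subr_lt0 -(pmulr_rlt0 _ t2_gt0).
have -> : t ^+ 2 * (qcoef t - pcoef t) = a11 * (1 + t ^+ 3) - t ^+ 2 * (t * a12 t + a21 t).
  by rewrite /qcoef /pcoef -a22E; ring.
rewrite t_a12_add_a21E.
have outerX : (t ^+ 2 + 6 * t + 1) * X ^- 3 <= X^-1.
  have := sqrtr_invcube_mul PA_gt0.
  have : 0 <= X ^- 3 by rewrite invr_ge0 exprn_ge0 // ltW.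
  by have := sqr_ge0 (1 - t); rewrite /PA; nra.
have outerY : - ((t ^+ 2 - 6 * t + 1) * Y ^- 3) <= Y^-1.
  have := sqrtr_invcube_mul PB_gt0.
  have : 0 <= Y ^- 3 by rewrite invr_ge0 exprn_ge0 // ltW.
  by have := sqr_ge0 (1 - t); rewrite /PB; nra.
have w_t : (1 - t)^-1 * (1 - t) = 1 by rewrite mulVf // gt_eqF ?subr_gt0.
have w_ge1 : 1 <= (1 - t)^-1 by rewrite invf_ge1 ?subr_gt0 //; lra.
have z_le1 : (1 + t)^-1 <= 1 by rewrite invf_le1 ?addr_gt0 //; lra.
have z_ge0 : 0 <= (1 + t)^-1 by rewrite invr_ge0; lra.
have inner : - (s3 / 9 * ((1 - t)^-1 - (1 + t)^-1) + (t ^+ 2 - 6 * t + 1) * Y ^- 3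
    - (t ^+ 2 + 6 * t + 1) * X ^- 3) <= 511 / 360 - 17 / 90 * (1 - t)^-1.
  by nra.
have margin : t ^+ 2 * (511 / 360 - 17 / 90 * (1 - t)^-1) < 17 / 36.
  have := cubic_margin t01.
  move: w_t w_ge1; set w := (1 - t)^-1 => w_t w_ge1; nra.
have := ler_wpM2l (ltW t2_gt0) inner; have := a11_le.
have : 0 <= t ^+ 3 by rewrite exprn_ge0 // ltW.
nra.
Qed.

Lemma gamma1E : gamma1 t = 72 * (qcoef t - pcoef t).
Proof.
have [s2_gt0 s3_gt0 X_gt0 Y_gt0] := radicals_gt0.
rewrite /gamma1 /pow32 /qcoef /pcoef /a22 /a12 /a21 /a11.
field: (sqr_sqrtr (ler0n R 2)) (sqr_sqrtr (ler0n R 3)).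
have [t_neq0 tB1_neq0 tD1_neq0 B1t_neq0 D1t_neq0] := denoms_neq0.
by rewrite ?t_neq0 ?tB1_neq0 ?tD1_neq0 ?B1t_neq0 ?D1t_neq0 !gt_eqF.
Qed.

Lemma gamma0E : gamma0 t = 9 * (qcoef t * a11 - pcoef t * a12 t).
Proof.
have [s2_gt0 s3_gt0 X_gt0 Y_gt0] := radicals_gt0.
have hX := sqr_sqrtr (ltW PA_gt0); have hY := sqr_sqrtr (ltW PB_gt0).
have PA_neq0 := gt_eqF PA_gt0; have PB_neq0 := gt_eqF PB_gt0.
rewrite /gamma0 /pow32 /qcoef /pcoef /a22 /a12 /a21 /a11.
set X := Num.sqrt (PA t) in hX X_gt0 *; set Y := Num.sqrt (PB t) in hY Y_gt0 *.
move: hX hY PA_neq0 PB_neq0; rewrite /PA /PB => hX hY PA_neq0 PB_neq0.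
field: (sqr_sqrtr (ler0n R 2)) (sqr_sqrtr (ler0n R 3)) hX hY.
have [t_neq0 tB1_neq0 tD1_neq0 B1t_neq0 D1t_neq0] := denoms_neq0.
by rewrite ?t_neq0 ?tB1_neq0 ?tD1_neq0 ?B1t_neq0 ?D1t_neq0 PA_neq0 PB_neq0 !gt_eqF.
Qed.

Lemma mass_ratioE : mass_ratio t = - qcoef t / pcoef t.
Proof.
have [s2_gt0 s3_gt0 X_gt0 Y_gt0] := radicals_gt0.
have [t_neq0 tB1_neq0 tD1_neq0 B1t_neq0 D1t_neq0] := denoms_neq0.
have num c : 24 * c - (s3 * t + s3) / (3 * (t + 1) ^+ 3) - 3 * (t + 3) / pow32 (PA t)
    + 3 * (t - 3) / pow32 (PB t) - (s3 * t - s3) / (3 * (t - 1) ^+ 3) = 3 * (8 * c + a12 t).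
  rewrite /pow32 /a12; field: (sqr_sqrtr (ler0n R 3)).
  by rewrite ?tB1_neq0 ?tD1_neq0 ?B1t_neq0 ?D1t_neq0 !gt_eqF.
have den c : 24 * c - s3 / 12 - 3 * s2 / 8 - 3 / 4 = 3 * (8 * c + a11).
  by rewrite a11E; field.
rewrite /mass_ratio num den /cfun gamma0E gamma1E.
have p_neq0 := gt_eqF pcoef_gt0.
have qp_neq0 : qcoef t - pcoef t != 0 by rewrite lt_eqF // subr_lt0 qcoef_lt_pcoef.
have gap_neq0 : a12 t - a11 != 0 by rewrite lt_eqF // subr_lt0 a12_lt_a11.
field; rewrite p_neq0 qp_neq0 /=.
rewrite [d in d != 0](_ : _ = 72 * pcoef t * (a12 t - a11)); last by ring.
by rewrite !mulf_neq0 ?pnatr_eq0 ?p_neq0.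
Qed.

End Estimates.

Theorem theorem10 (R : realType) (t mu1 mu2 : R) :
  0 < t -> t < 1 -> mu2 != 0 ->
  (central_configuration (nested_cubes t) (nested_masses mu1 mu2)
   <-> mu1 / mu2 = mass_ratio t).
Proof.
move=> t_gt0 t_lt1 mu2_neq0; have t01 : 0 < t < 1 by rewrite t_gt0.
rewrite (central_configuration_nested_cubesE _ _ t01) (mass_ratioE t01).
apply: eliminate_multiplier => //.
- by rewrite gt_eqF //; apply: pcoef_gt0.
- by rewrite lt_eqF //; apply: qcoef_lt_pcoef.
Qed.
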